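(* For every graph $G$, every linear order $\prec$ on $V(G)$ and every $r\in\mathbb N$, \[\mathrm{wcol}_r(\mathrm{cp}(G),\mathrm{cp}(\prec))\le 2\cdot\mathrm{wcol}_r(G,\prec).\]
   Context: The copy product $\mathrm{cp}(G)$ is obtained by taking the disjoint union of $G$ with a copy $G'$ (the copy of $v$ denoted $\mathrm{cp}(v)$), making every $v$ adjacent to $\mathrm{cp}(v)$, and making $v$ and $\mathrm{cp}(v)$ true twins (same closed neighborhoods); equivalently the lexicographic product of $G$ with $K_2$. $\mathrm{cp}(\prec)$ is the order on $V(\mathrm{cp}(G))$ obtained from $\prec$ by inserting each $\mathrm{cp}(v)$ immediately before $v$. $\mathrm{wcol}_r(H,\prec)$ is the maximum over $v$ of the number of vertices $u$ such that some path of length at most $r$ from $v$ to $u$ has $u$ as its $\prec$-smallest vertex. *)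

From mathcomp Require Import all_boot.
Set Implicit Arguments. Unset Strict Implicit. Unset Printing Implicit Defensive.

Definition simple_graph (T : finType) (e : rel T) : Prop :=
  symmetric e /\ irreflexive e.

Definition strict_linear_order (T : finType) (lt : rel T) : Prop :=
  [/\ irreflexive lt, transitive lt & forall x y, x != y -> lt x y || lt y x].

Definition wreach (T : finType) (e : rel T) (lt : rel T) (r : nat) (v : T)
  : {set T} :=
  [set u | [exists k : 'I_r.+1, exists p : k.-tuple T,
      [&& path e v p, uniq (v :: p), last v p == u &
          all (fun w => (w == u) || lt u w) (v :: p)]]].

Definition wcol (T : finType) (e : rel T) (lt : rel T) (r : nat) : nat :=
  \max_(v : T) #|wreach e lt r v|.

(* Copy product: vertex (v, true) is v, (v, false) is cp(v).
   Lexicographic product G[K_2]. *)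
Definition cp_adj (T : finType) (e : rel T) : rel (T * bool) :=
  fun x y => ((x.1 == y.1) && (x.2 != y.2)) || e x.1 y.1.

(* cp(lt): cp(v) is inserted immediately before v. *)
Definition cp_lt (T : finType) (lt : rel T) : rel (T * bool) :=
  fun x y => lt x.1 y.1 || [&& x.1 == y.1, ~~ x.2 & y.2].

(* Projecting a walk of cp(G) to G, i.e. forgetting which copy each vertex is, gives a walk
   of G in which consecutive vertices are equal or adjacent, and the projection of the
   cp(<)-minimum is the <-minimum of the projection.  Removing the loops of that walk leaves a
   path of G no longer than the original one, so every vertex weakly r-reachable from x in
   cp(G) is a copy of a vertex weakly r-reachable from the projection of x in G.  Each vertex
   of G has two copies. *)
From mathcomp Require Import all_boot.

Set Implicit Arguments. Unset Strict Implicit. Unset Printing Implicit Defensive.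

Definition rc (T : eqType) (e : rel T) : rel T := fun a b => (a == b) || e a b.

Lemma uniq_rc_path (T : eqType) (e : rel T) (x : T) (s : seq T) :
  uniq (x :: s) -> path (rc e) x s -> path e x s.
Proof.
elim: s x => [//|y s IHs] x /andP[/norP[neq_xy _] uniq_ys] /= /andP[rc_xy path_ys].
by rewrite /rc (negPf neq_xy) /= in rc_xy; rewrite rc_xy IHs.
Qed.

Lemma wreach_rc_walk (T : finType) (e lt : rel T) (r : nat) (v u : T) (p : seq T) :
  size p <= r -> path (rc e) v p -> last v p = u ->
  all (fun w => (w == u) || lt u w) (v :: p) -> u \in wreach e lt r v.
Proof.
move=> size_p walk_p last_p min_u.
case: (shortenP walk_p) last_p => q path_q uniq_q sub_qp last_q.
have size_q : size q < r.+1.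
  rewrite ltnS (leq_trans _ size_p) // uniq_leq_size //; by case/andP: uniq_q.
rewrite inE; apply/existsP; exists (Ordinal size_q); apply/existsP; exists (in_tuple q).
apply/and4P; split; [exact: uniq_rc_path | exact: uniq_q | by rewrite last_q |].
apply/allP => w /predU1P[-> | /sub_qp qw]; first by case/andP: min_u.
by apply: (allP min_u); rewrite inE qw orbT.
Qed.

Lemma wreach_homo_rc (S T : finType) (eS ltS : rel S) (e lt : rel T) (f : S -> T)
    (r : nat) (v u : S) :
  {homo f : a b / eS a b >-> rc e a b} -> {homo f : a b / ltS a b >-> rc lt a b} ->
  u \in wreach eS ltS r v -> f u \in wreach e lt r (f v).
Proof.
move=> homo_e homo_lt; rewrite inE => /existsP[k /existsP[p]].
case/and4P=> path_p _ /eqP last_p min_u.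
apply: (wreach_rc_walk (p := map f p)).
- by rewrite size_map size_tuple -ltnS.
- by rewrite path_map; apply: sub_path path_p.
- by rewrite last_map last_p.
rewrite -map_cons all_map; apply: sub_all min_u => w /predU1P[-> | /homo_lt].
  by rewrite /= eqxx.
by rewrite /= /rc eq_sym.
Qed.

Lemma wreach_cp_sub (T : finType) (e lt : rel T) (r : nat) (x : T * bool) :
  wreach (cp_adj e) (cp_lt lt) r x \subset setX (wreach e lt r x.1) [set: bool].
Proof.
apply/subsetP => -[u c] reach_u; rewrite in_setX in_setT andbT.
apply: (wreach_homo_rc (f := fst)) reach_u => a b.
- by rewrite /cp_adj /rc => /orP[/andP[/eqP -> _] | ->]; rewrite ?eqxx ?orbT.
- by rewrite /cp_lt /rc => /orP[-> | /and3P[/eqP -> _ _]]; rewrite ?eqxx ?orbT.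
Qed.

Theorem lemma7p20 (T : finType) (e lt : rel T) (r : nat) :
  simple_graph e -> strict_linear_order lt ->
  wcol (cp_adj e) (cp_lt lt) r <= 2 * wcol e lt r.
Proof.
(* The bound holds for arbitrary relations e and lt. *)
move=> _ _; apply/bigmax_leqP => x _.
apply: leq_trans (subset_leq_card (wreach_cp_sub e lt r x)) _.
rewrite cardsX cardsT card_bool mulnC leq_mul2l /=.
exact: leq_bigmax.
Qed.
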